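(* Let $(w_i)_{i\in[n]}$ be positive weights, $W_n=w_I$ with $I$ uniform on $[n]$, $\beta\ge0$, $h\in\mathbb R$, and let $\sigma$ be distributed according to $$\mu_n(\sigma)=\frac{1}{Z_n}\exp\Big(\frac{\beta}{2n\mathbb E[W_n]}\Big(\sum_iw_i\sigma_i\Big)^2+h\sum_i\sigma_i\Big),\quad\sigma\in\{-1,1\}^n.$$ Define $$c_n(s)=\frac1n\log\mathbb E\Big[\exp\Big(s\sqrt{\tfrac{\beta}{\mathbb E[W_n]}}\sum_{i\in[n]}w_i\sigma_i\Big)\Big],$$ $$G_n(x;s)=\frac{x^2}{2}-\mathbb E\Big[\log\cosh\Big(\sqrt{\tfrac{\beta}{\mathbb E[W_n]}}W_n(x+s)+h\Big)\Big],\qquad G_n(x)=G_n(x;0).$$ Then for any constant $a\in\mathbb R$, $$c_n(s)=\frac1n\log\frac{\int_{-\infty}^\infty e^{-nG_n(\frac{x}{\sqrt n}+a;s)}\,dx}{\int_{-\infty}^\infty e^{-nG_n(\frac{x}{\sqrt n}+a)}\,dx}.$$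
   Context: In $c_n$ the expectation is under $\mu_n$; in $G_n$ the expectation is over $W_n$, i.e. $\frac1n\sum_i f(w_i)$. *)

From HB Require Import structures.
From mathcomp Require Import all_boot all_order all_algebra.
From mathcomp Require Import all_classical all_reals all_analysis.
Set Implicit Arguments. Unset Strict Implicit. Unset Printing Implicit Defensive.
Import Order.TTheory GRing.Theory Num.Theory.
Local Open Scope ring_scope.

Section Defs.
Variable R : realType.

Definition coshR (x : R) : R := (expR x + expR (- x)) / 2.

Definition spin (b : bool) : R := if b then 1 else -1.

Variable n : nat.
Variable w : 'I_n -> R.

Definition EW : R := (\sum_(i < n) w i) / n%:R.

Definition wmag (sigma : {ffun 'I_n -> bool}) : R := \sum_(i < n) w i * spin (sigma i).

Definition hamil (beta h : R) (sigma : {ffun 'I_n -> bool}) : R :=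
  beta / (2 * n%:R * EW) * (wmag sigma) ^+ 2 + h * \sum_(i < n) spin (sigma i).

Definition Zn (beta h : R) : R := \sum_(sigma : {ffun 'I_n -> bool}) expR (hamil beta h sigma).

Definition mu_n (beta h : R) (sigma : {ffun 'I_n -> bool}) : R :=
  expR (hamil beta h sigma) / Zn beta h.

Definition c_n (beta h s : R) : R :=
  n%:R^-1 * ln (\sum_(sigma : {ffun 'I_n -> bool})
      mu_n beta h sigma * expR (s * Num.sqrt (beta / EW) * wmag sigma)).

Definition G_n (beta h x s : R) : R :=
  x ^+ 2 / 2 - n%:R^-1 * \sum_(i < n) ln (coshR (Num.sqrt (beta / EW) * w i * (x + s) + h)).

End Defs.

From HB Require Import structures.
From mathcomp Require Import all_boot all_order all_algebra.
From mathcomp Require Import all_classical all_reals all_analysis.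
From mathcomp Require Import ring lra measurable_realfun normal_distribution.
Import Order.TTheory GRing.Theory Num.Theory.
Local Open Scope ring_scope.

(* Hubbard-Stratonovich transform.  With b = sqrt(beta / E[W_n]) and
   M(sigma) = sum_i w_i sigma_i, completing the square shows that
     exp(-n G_n(x/sqrt n + a; t))
       = 2^-n sum_sigma exp(H(sigma) + t b M(sigma)) exp(-(x - m_sigma)^2 / 2)
   for explicit centres m_sigma, because summing exp(sum_i sigma_i z_i) over
   sigma gives prod_i 2 cosh z_i.  Integrating in x, every Gaussian contributes
   the same factor sqrt(2 pi), so the integral is a constant times the tilted
   partition function sum_sigma exp(H(sigma) + t b M(sigma)).  The constant
   cancels in the ratio t = s over t = 0, which is E_mu[exp(s b M)]. *)

Section gaussian_mixture.
Variable R : realType.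
Local Notation mu := (@lebesgue_measure R).

Lemma complete_square (r b M a x : R) : r != 0 ->
  - (r ^+ 2 * (x / r + a) ^+ 2 / 2) + b * (x / r + a) * M =
  b ^+ 2 / (2 * r ^+ 2) * M ^+ 2 - (x - (b * M / r - a * r)) ^+ 2 / 2.
Proof. by move=> r_neq0; field. Qed.

Lemma integral_normal_fun (m s : R) : s != 0 ->
  (\int[mu]_x (normal_fun m s x)%:E = (normal_peak s)^-1%:E)%E.
Proof.
move=> s_neq0; have peak_gt0 := normal_peak_gt0 s_neq0.
have peak_neq0 : normal_peak s != 0 by rewrite gt_eqF.
have := integral_normal_pdf m s; rewrite normal_pdfE //.
under eq_integral do rewrite EFinM.
rewrite ge0_integralZl //; last first.
- by rewrite lee_fin normal_peak_ge0.
- by move=> x _; rewrite lee_fin normal_fun_ge0.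
- by apply/measurable_EFinP; exact: measurable_normal_fun.
case: (\int[_]_x _)%E => [r| |] /=.
- move=> /eqP; rewrite -EFinM eqe => /eqP peak_r.
  by congr EFin; apply: (mulfI peak_neq0); rewrite peak_r divff.
- by rewrite gt0_muley ?lte_fin.
- by rewrite gt0_muleNy ?lte_fin.
Qed.

Lemma Rintegral_sum_normal_fun (I : finType) (c m : I -> R) (s : R) :
  s != 0 -> (forall i, 0 <= c i) ->
  Rintegral mu setT (fun x => \sum_i c i * normal_fun (m i) s x) =
  (normal_peak s)^-1 * \sum_i c i.
Proof.
move=> s_neq0 c_ge0; rewrite /Rintegral.
under eq_integral do rewrite -sumEFin.
rewrite ge0_integral_sum //; last first.
- by move=> i x _; rewrite lee_fin mulr_ge0 ?normal_fun_ge0.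
- by move=> i; apply/measurable_EFinP/measurable_funM => //; exact: measurable_normal_fun.
rewrite (eq_bigr (fun i => (c i * (normal_peak s)^-1)%:E)%E) => [|i _].
  by rewrite sumEFin /= -mulr_suml mulrC.
under eq_integral do rewrite EFinM.
rewrite ge0_integralZl ?lee_fin //; last by move=> x _; rewrite lee_fin normal_fun_ge0.
rewrite integral_normal_fun //.
by apply/measurable_EFinP; exact: measurable_normal_fun.
Qed.

End gaussian_mixture.

Section cosh_spin_expansion.
Variable R : realType.

Lemma coshR_gt0 (z : R) : 0 < coshR z.
Proof. by rewrite /coshR divr_gt0 // addr_gt0 // expR_gt0. Qed.

Lemma prod_coshR (I : finType) (z : I -> R) :
  \prod_i coshR (z i) =
  (2^-1) ^+ #|I| * \sum_(sg : {ffun I -> bool}) expR (\sum_i spin R (sg i) * z i).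
Proof.
have coshR_sum_spin i : coshR (z i) = 2^-1 * \sum_(b : bool) expR (spin R b * z i).
  by rewrite big_bool /= /spin /coshR mul1r mulN1r mulrC.
rewrite (eq_bigr _ (fun i _ => coshR_sum_spin i)) big_split /= prodr_const.
by rewrite bigA_distr_bigA; congr (_ * _); apply: eq_bigr => sg _; rewrite expR_sum.
Qed.

End cosh_spin_expansion.

Section curie_weiss.
Variables (R : realType) (n : nat) (w : 'I_n -> R) (beta h : R).
Hypotheses (n_gt0 : (0 < n)%N) (w_gt0 : forall i, 0 < w i) (beta_ge0 : 0 <= beta).

Local Notation b := (Num.sqrt (beta / EW w)).
Local Notation r := (Num.sqrt n%:R : R).

Definition tilted_Zn (t : R) : R :=
  \sum_(sg : {ffun 'I_n -> bool}) expR (hamil w beta h sg + t * b * wmag w sg).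

Lemma ZnE : Zn w beta h = tilted_Zn 0.
Proof. by apply: eq_bigr => sg _; rewrite !mul0r addr0. Qed.

Lemma c_nE s : c_n w beta h s = n%:R^-1 * ln (tilted_Zn s / tilted_Zn 0).
Proof.
rewrite /c_n /mu_n -ZnE /tilted_Zn mulr_suml.
by congr (_ * ln _); apply: eq_bigr => sg _; rewrite mulrAC -expRD.
Qed.

Lemma EW_gt0 : 0 < EW w.
Proof.
rewrite divr_gt0 ?ltr0n //; case: n w w_gt0 n_gt0 => [//|m] v v_gt0 _.
by rewrite big_ord_recl ltr_wpDr ?v_gt0 // sumr_ge0 // => i _; exact/ltW.
Qed.

Lemma expNnG_n t a x :
  expR (- (n%:R * G_n w beta h (x / r + a) t)) =
  (2^-1) ^+ n * \sum_(sg : {ffun 'I_n -> bool})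
     expR (hamil w beta h sg + t * b * wmag w sg) *
     normal_fun (b * wmag w sg / r - a * r) 1 x.
Proof.
have n_pos : 0 < n%:R :> R by rewrite ltr0n.
have r2 : r ^+ 2 = n%:R by rewrite sqr_sqrtr // ltW.
have r_neq0 : r != 0 by rewrite gt_eqF // sqrtr_gt0.
have b2 : b ^+ 2 = beta / EW w by rewrite sqr_sqrtr // divr_ge0 // ltW // EW_gt0.
rewrite /G_n mulrBr mulVKf ?gt_eqF // opprB expRD expR_sum.
under eq_bigr do rewrite lnK ?posrE ?coshR_gt0 //.
rewrite prod_coshR card_ord -mulrA mulr_suml; congr (_ * _).
apply: eq_bigr => sg _; rewrite /normal_fun -!expRD; congr expR.
have -> : \sum_(i < n) spin R (sg i) * (b * w i * (x / r + a + t) + h) =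
    b * (x / r + a) * wmag w sg + t * b * wmag w sg + h * \sum_(i < n) spin R (sg i).
  by rewrite /wmag !mulr_sumr -!big_split; apply: eq_bigr => i _ /=; ring.
rewrite /hamil.
have -> : beta / (2 * n%:R * EW w) = b ^+ 2 / (2 * r ^+ 2).
  by rewrite r2 b2 invfM mulrA mulrAC.
have := @complete_square R r b (wmag w sg) a x r_neq0; rewrite r2 expr1n; lra.
Qed.

Lemma Rintegral_expNnG_n t a :
  Rintegral (@lebesgue_measure R) setT
    (fun x => expR (- (n%:R * G_n w beta h (x / r + a) t))) =
  (normal_peak (1 : R))^-1 * ((2^-1) ^+ n * tilted_Zn t).
Proof.
under [X in Rintegral _ _ X]funext => x.
  rewrite expNnG_n mulr_sumr; under eq_bigr do rewrite mulrA.
  over.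
by rewrite Rintegral_sum_normal_fun ?oner_neq0 // -mulr_sumr.
Qed.

End curie_weiss.

Theorem lemma3p2 (R : realType) (n : nat) (w : 'I_n -> R) (beta h s a : R) :
  (0 < n)%N -> (forall i, 0 < w i) -> 0 <= beta ->
  c_n w beta h s =
  n%:R^-1 * ln (Rintegral (@lebesgue_measure R) setT
                   (fun x => expR (- (n%:R * G_n w beta h (x / Num.sqrt n%:R + a) s)))
              / Rintegral (@lebesgue_measure R) setT
                   (fun x => expR (- (n%:R * G_n w beta h (x / Num.sqrt n%:R + a) 0)))).
Proof.
move=> n_gt0 w_gt0 beta_ge0.
rewrite c_nE !Rintegral_expNnG_n //.
have C_neq0 : (normal_peak (1 : R))^-1 * (2^-1) ^+ n != 0.
  have peak_gt0 : 0 < normal_peak (1 : R) by apply: normal_peak_gt0; exact: oner_neq0.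
  apply: mulf_neq0; first by rewrite invr_eq0 gt_eqF.
  by rewrite expf_neq0 // invr_eq0 pnatr_eq0.
by rewrite !mulrA -mulf_div divff // mul1r.
Qed.
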